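(* In the protocol IT-HS described in the context, with $f<\frac{n}{3}$ Byzantine parties, let $lock>0$ be some nonfaulty party's $lock$ variable and $lock\_val$ its value. If some nonfaulty party has either $prev\_key2\ge lock$, or $key2\ge lock$ and $key2\_val\neq lock\_val$, then there exist $f+1$ nonfaulty parties whose $key1$, $key1\_val$ and $prev\_key1$ fields support opening the pair $(lock,lock\_val)$.
   Context: Model. $n$ parties with inputs $x_i$; up to $f$ Byzantine (arbitrary behaviour), the rest nonfaulty; authenticated point-to-point channels; partial synchrony: after an unknown time GST every message arrives within known $\Delta$ time and clocks are synchronized, before GST delays are arbitrary but finite. Support: fields $(key1,key1\_val,prev\_key1)=(k,w,pk)$ (as carried in a $proof$ message) support opening a pair $(L,V)$ if $L\le pk$, or $L\le k$ and $w\neq V$. Protocol IT-HS (party $i$). Variables: $lock\gets 0$, $lock\_val\gets x_i$; $key3\gets 0$, $key3\_val\gets x_i$; $key2\gets 0$, $key2\_val\gets x_i$, $prev\_key2\gets -1$; $key1\gets 0$, $key1\_val\gets x_i$, $prev\_key1\gets -1$; $view\gets 0$; $highest\_request[j]\gets 0$, $highest\_abort[j]\gets 0$ for $j\in[n]$. ''Send-upon-join $m$'': for each $j$, send $m$ to $j$ as soon as $highest\_request[j]$ equals the current view. Background: (B1) on $\langle request,v\rangle$ from $j$, $highest\_request[j]\gets\max(highest\_request[j],v)$. (B2) on $\langle done,val\rangle$ from $f+1$ parties with the same $val$: if no $done$ sent yet, send $\langle done,val\rangle$ to all. (B3) on $\langle done,val\rangle$ from $n-f$ parties with the same $val$: decide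 $val$, terminate. (B4) on $\langle abort,v\rangle$ from $j$ with $highest\_abort[j]<v$: $highest\_abort[j]\gets v$; $u\gets$ the $(f+1)$-th largest entry of $highest\_abort$; if $u>highest\_abort[i]$ send $\langle abort,u\rangle$ to all and set $highest\_abort[i]\gets u$; $w\gets$ the $(n-f)$-th largest entry; if $w\ge view$ set $view\gets w+1$. Views: for each value $v$ of $view$, while $view=v$: fresh per-view state; after $11\Delta$ local time send $\langle abort,v\rangle$ to all; ignore other views' messages except $abort$, $done$, $request$; primary $p=(v\bmod n)+1$. View change: send $\langle request,v\rangle$ to all; when $highest\_request[p]=v$ send $\langle suggest,key3,key3\_val,key2,key2\_val,prev\_key2,v\rangle$ to $p$; send-upon-join $\langle proof,key1,key1\_val,prev\_key1,v\rangle$. If $i=p$: upon first $\langle suggest,k3,v3,k2,v2,pk2,v\rangle$ from a party, if $pk2<k2<v$ add $(k2,v2,pk2)$ to $key2\_proofs$; if $k3=0$ add $(k3,v3)$ to $suggestions$; else if $k3<v$ add $(k3,v3)$ as soon as at least $f+1$ triples $(k,w,pk)\in key2\_proofs$ satisfy $k3\le pk$ or ($k3\le k$ and $w=v3$); once $|suggestions|\ge n-f$, send-upon-join $\langle propose,k,w,v\rangle$ for $(k,w)\in suggestions$ with maximal $k$. Message processing: upon first $\langle proof,k1,v1,pk1,v\rangle$ from a party, if $v>k1>pk1$ add $(k1,v1,pk1)$ to $proofs$. Upon first $\langle propose,key,val,v\rangle$ from $p$: if $lock=0$ or $val=lock\_val$, send-upon-join $\langle echo,val,v\rangle$; else if $v>key\ge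 lock$, then once at least $f+1$ triples $(k,w,pk)\in proofs$ satisfy $lock\le pk$ or ($lock\le k$ and $w\ne lock\_val$), send-upon-join $\langle echo,val,v\rangle$. Upon $\langle echo,val,v\rangle$ from $n-f$ parties with the same $val$: send-upon-join $\langle key1,val,v\rangle$; if $key1\_val\ne val$ then $prev\_key1\gets key1$, $key1\_val\gets val$; $key1\gets v$. Upon $\langle key1,val,v\rangle$ from $n-f$ parties (same $val$): send-upon-join $\langle key2,val,v\rangle$; if $key2\_val\ne val$ then $prev\_key2\gets key2$, $key2\_val\gets val$; $key2\gets v$. Upon $\langle key2,val,v\rangle$ from $n-f$ (same $val$): send-upon-join $\langle key3,val,v\rangle$; $key3\gets v$, $key3\_val\gets val$. Upon $\langle key3,val,v\rangle$ from $n-f$ (same $val$): send-upon-join $\langle lock,val,v\rangle$; $lock\gets v$, $lock\_val\gets val$. Upon $\langle lock,val,v\rangle$ from $n-f$ (same $val$): if no $done$ sent yet, send $\langle done,val\rangle$ to all. *)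

From HB Require Import structures.
From mathcomp Require Import all_boot all_order all_algebra.
Set Implicit Arguments. Unset Strict Implicit. Unset Printing Implicit Defensive.
Import Order.TTheory GRing.Theory Num.Theory.
Local Open Scope ring_scope.

Definition supports {V : eqType} (k : int) (w : V) (pk : int) (L : int) (Vv : V) : bool :=
  (L <= pk) || ((L <= k) && (w != Vv)).

Inductive stage := SEcho | SKey1 | SKey2 | SKey3 | SLock.

Definition stage_eqb (a b : stage) : bool :=
  match a, b with
  | SEcho, SEcho | SKey1, SKey1 | SKey2, SKey2 | SKey3, SKey3 | SLock, SLock => true
  | _, _ => false
  end.

Section ITHS.
Variables (n f : nat) (V : eqType) (x : 'I_n -> V) (F : {set 'I_n}).

(* Messages.  [MVote s val v] is <echo,val,v>, <key1,val,v>, ..., <lock,val,v>. *)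
Inductive msg :=
| MRequest (v : int)
| MDone (val : V)
| MAbort (v : int)
| MSuggest (k3 : int) (v3 : V) (k2 : int) (v2 : V) (pk2 : int) (v : int)
| MProof (k1 : int) (v1 : V) (pk1 : int) (v : int)
| MPropose (key : int) (val : V) (v : int)
| MVote (s : stage) (val : V) (v : int).

Definition out := ('I_n * msg)%type.

Fixpoint out_in (b : 'I_n) (m : msg) (o : seq out) : Prop :=
  match o with
  | [::] => False
  | p :: o' => p = (b, m) \/ out_in b m o'
  end.

Record keys := Keys {
  lock : int; lock_val : V;
  key3 : int; key3_val : V;
  key2 : int; key2_val : V; prev_key2 : int;
  key1 : int; key1_val : V; prev_key1 : int }.

(* per-view state (reset on each view change) *)
Record pview := PView {
  sugg : 'I_n -> option (int * V * int * V * int);  (* first suggest from each party *)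
  prf : 'I_n -> option (int * V * int);             (* first proof from each party *)
  prop : option (int * V * int * V);  (* first propose from the primary: key, val,
                                         and snapshot of (lock, lock_val) at receipt *)
  echoed : bool;
  proposed : bool;
  sugg_sent : bool;
  recv : stage -> 'I_n -> V -> bool;  (* received <stage,val,view> from party *)
  fired : stage -> V -> bool;         (* "upon n-f ..." already executed for val *)
  join : seq msg }.                   (* send-upon-join messages of this view *)

Record lstate := LState {
  ks : keys; pv : pview; view : int;
  hreq : 'I_n -> int; habort : 'I_n -> int;
  done_sent : bool; decided : option V;
  rdone : 'I_n -> V -> bool }.

Definition updf {A : Type} (h : 'I_n -> A) (j : 'I_n) (a : A) : 'I_n -> A :=
  fun k => if k == j then a else h k.

(* primary of view v is party (v mod n)+1, i.e. index v mod n of 'I_n *)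
Definition is_primary (v : int) (j : 'I_n) : bool := (j : nat) == (absz v %% n)%N.

Definition bcast (m : msg) : seq out := [seq (j, m) | j <- enum 'I_n].

(* k-th largest entry, counting from 0 *)
Definition kth_largest (k : nat) (h : 'I_n -> int) : int :=
  nth 0 (sort (fun a b : int => b <= a) [seq h j | j <- enum 'I_n]) k.

Definition set_pv (s : lstate) (p : pview) : lstate :=
  LState (ks s) p (view s) (hreq s) (habort s) (done_sent s) (decided s) (rdone s).
Definition set_ks (s : lstate) (k : keys) : lstate :=
  LState k (pv s) (view s) (hreq s) (habort s) (done_sent s) (decided s) (rdone s).
Definition set_hreq (s : lstate) h : lstate :=
  LState (ks s) (pv s) (view s) h (habort s) (done_sent s) (decided s) (rdone s).
Definition set_habort (s : lstate) h : lstate :=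
  LState (ks s) (pv s) (view s) (hreq s) h (done_sent s) (decided s) (rdone s).
Definition set_done_sent (s : lstate) b : lstate :=
  LState (ks s) (pv s) (view s) (hreq s) (habort s) b (decided s) (rdone s).
Definition set_decided (s : lstate) d : lstate :=
  LState (ks s) (pv s) (view s) (hreq s) (habort s) (done_sent s) d (rdone s).
Definition set_rdone (s : lstate) r : lstate :=
  LState (ks s) (pv s) (view s) (hreq s) (habort s) (done_sent s) (decided s) r.

Definition pv_sugg (p : pview) g : pview :=
  PView g (prf p) (prop p) (echoed p) (proposed p) (sugg_sent p) (recv p) (fired p) (join p).
Definition pv_prf (p : pview) g : pview :=
  PView (sugg p) g (prop p) (echoed p) (proposed p) (sugg_sent p) (recv p) (fired p) (join p).
Definition pv_prop (p : pview) g : pview :=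
  PView (sugg p) (prf p) g (echoed p) (proposed p) (sugg_sent p) (recv p) (fired p) (join p).
Definition pv_echoed (p : pview) g : pview :=
  PView (sugg p) (prf p) (prop p) g (proposed p) (sugg_sent p) (recv p) (fired p) (join p).
Definition pv_proposed (p : pview) g : pview :=
  PView (sugg p) (prf p) (prop p) (echoed p) g (sugg_sent p) (recv p) (fired p) (join p).
Definition pv_sugg_sent (p : pview) g : pview :=
  PView (sugg p) (prf p) (prop p) (echoed p) (proposed p) g (recv p) (fired p) (join p).
Definition pv_recv (p : pview) g : pview :=
  PView (sugg p) (prf p) (prop p) (echoed p) (proposed p) (sugg_sent p) g (fired p) (join p).
Definition pv_fired (p : pview) g : pview :=
  PView (sugg p) (prf p) (prop p) (echoed p) (proposed p) (sugg_sent p) (recv p) g (join p).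
Definition pv_addjoin (p : pview) (m : msg) : pview :=
  PView (sugg p) (prf p) (prop p) (echoed p) (proposed p) (sugg_sent p) (recv p) (fired p)
    (rcons (join p) m).

Definition fresh_pv (j : seq msg) : pview :=
  PView (fun _ => None) (fun _ => None) None false false false
        (fun _ _ _ => false) (fun _ _ => false) j.

Definition enter_view (s : lstate) (w : int) : lstate * seq out :=
  let k := ks s in
  (LState k (fresh_pv [:: MProof (key1 k) (key1_val k) (prev_key1 k) w]) w
          (hreq s) (habort s) (done_sent s) (decided s) (rdone s),
   bcast (MRequest w)).

Definition flush (s : lstate) : lstate * seq out :=
  let v := view s in
  let jm := flatten [seq (if hreq s j == v then [seq (j, m) | m <- join (pv s)] else [::])
                    | j <- enum 'I_n] in
  let ps := [seq j <- enum 'I_n | is_primary v j && (hreq s j == v)] in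
  let k := ks s in
  if ~~ sugg_sent (pv s) && (ps != [::]) then
    (set_pv s (pv_sugg_sent (pv s) true),
     jm ++ [seq (j, MSuggest (key3 k) (key3_val k) (key2 k) (key2_val k) (prev_key2 k) v)
           | j <- ps])
  else (s, jm).

Definition on_abort (i j : 'I_n) (v : int) (s : lstate) : lstate * seq out :=
  if habort s j < v then
    let ha1 := updf (habort s) j v in
    let u := kth_largest f ha1 in
    let ha2 := if ha1 i < u then updf ha1 i u else ha1 in
    let o1 := if ha1 i < u then bcast (MAbort u) else [::] in
    let w := kth_largest (n - f).-1 ha2 in
    let s1 := set_habort s ha2 in
    if view s1 <= w then
      let r := enter_view s1 (w + 1) in (r.1, o1 ++ r.2)
    else (s1, o1)
  else (s, [::]).

Definition deliver (i j : 'I_n) (m : msg) (s : lstate) : lstate * seq out :=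
  match m with
  | MRequest v => (set_hreq s (updf (hreq s) j (Num.max (hreq s j) v)), [::])
  | MDone val =>
      (set_rdone s (fun k w => ((k == j) && (w == val)) || rdone s k w), [::])
  | MAbort v => on_abort i j v s
  | MSuggest k3 v3 k2 v2 pk2 v =>
      if (v == view s) && is_primary (view s) i && (sugg (pv s) j == None) then
        (set_pv s (pv_sugg (pv s) (updf (sugg (pv s)) j (Some (k3, v3, k2, v2, pk2)))), [::])
      else (s, [::])
  | MProof k1 v1 pk1 v =>
      if (v == view s) && (prf (pv s) j == None) then
        (set_pv s (pv_prf (pv s) (updf (prf (pv s)) j (Some (k1, v1, pk1)))), [::])
      else (s, [::])
  | MPropose key val v =>
      if (v == view s) && is_primary v j && (prop (pv s) == None) then
        (set_pv s (pv_prop (pv s)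
           (Some (key, val, lock (ks s), lock_val (ks s)))), [::])
      else (s, [::])
  | MVote st val v =>
      if v == view s then
        (set_pv s (pv_recv (pv s)
           (fun st' k w => (stage_eqb st' st && (k == j) && (w == val)) || recv (pv s) st' k w)),
         [::])
      else (s, [::])
  end.

Definition stage_act (st : stage) (val : V) (s : lstate) : lstate * seq out :=
  let v := view s in
  let k := ks s in
  let p := pv_fired (pv s) (fun st' w => (stage_eqb st' st && (w == val)) || fired (pv s) st' w) in
  match st with
  | SEcho =>
      let k' := if key1_val k != val then
                  Keys (lock k) (lock_val k) (key3 k) (key3_val k) (key2 k) (key2_val k)
                       (prev_key2 k) v val (key1 k)
                else
                  Keys (lock k) (lock_val k) (key3 k) (key3_val k) (key2 k) (key2_val k)
                       (prev_key2 k) v (key1_val k) (prev_key1 k) in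
      (set_ks (set_pv s (pv_addjoin p (MVote SKey1 val v))) k', [::])
  | SKey1 =>
      let k' := if key2_val k != val then
                  Keys (lock k) (lock_val k) (key3 k) (key3_val k) v val (key2 k)
                       (key1 k) (key1_val k) (prev_key1 k)
                else
                  Keys (lock k) (lock_val k) (key3 k) (key3_val k) v (key2_val k) (prev_key2 k)
                       (key1 k) (key1_val k) (prev_key1 k) in
      (set_ks (set_pv s (pv_addjoin p (MVote SKey2 val v))) k', [::])
  | SKey2 =>
      let k' := Keys (lock k) (lock_val k) v val (key2 k) (key2_val k) (prev_key2 k)
                     (key1 k) (key1_val k) (prev_key1 k) in
      (set_ks (set_pv s (pv_addjoin p (MVote SKey3 val v))) k', [::])
  | SKey3 =>
      let k' := Keys v val (key3 k) (key3_val k) (key2 k) (key2_val k) (prev_key2 k)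
                     (key1 k) (key1_val k) (prev_key1 k) in
      (set_ks (set_pv s (pv_addjoin p (MVote SLock val v))) k', [::])
  | SLock =>
      if ~~ done_sent s then (set_done_sent (set_pv s p) true, bcast (MDone val))
      else (set_pv s p, [::])
  end.

Definition key2proof_ok (s : lstate) (l : 'I_n) (k3 : int) (v3 : V) : bool :=
  match sugg (pv s) l with
  | Some (_, _, k2, v2, pk2) =>
      (pk2 < k2) && (k2 < view s) && ((k3 <= pk2) || ((k3 <= k2) && (v2 == v3)))
  | None => false
  end.

Definition suggestion (s : lstate) (j : 'I_n) : option (int * V) :=
  match sugg (pv s) j with
  | Some (k3, v3, _, _, _) =>
      if (k3 == 0) ||
         ((k3 < view s) && (f.+1 <= #|[set l : 'I_n | key2proof_ok s l k3 v3]|)%N)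
      then Some (k3, v3) else None
  | None => None
  end.

Definition proof_ok (s : lstate) (j : 'I_n) (L : int) (Lv : V) : bool :=
  match prf (pv s) j with
  | Some (k1, v1, pk1) => (pk1 < k1) && (k1 < view s) && supports k1 v1 pk1 L Lv
  | None => false
  end.

Inductive trig (i : 'I_n) : lstate -> lstate -> seq out -> Prop :=
| trig_stage st val s :
    (n - f <= #|[set j : 'I_n | recv (pv s) st j val]|)%N ->
    ~~ fired (pv s) st val ->
    trig i s (stage_act st val s).1 (stage_act st val s).2
| trig_echo s key val lk lv :
    prop (pv s) = Some (key, val, lk, lv) ->
    ~~ echoed (pv s) ->
    [|| lk == 0, val == lv |
        [&& key < view s, lk <= key &
            (f.+1 <= #|[set j : 'I_n | proof_ok s j lk lv]|)%N]] ->
    trig i s (set_pv s (pv_addjoin (pv_echoed (pv s) true) (MVote SEcho val (view s)))) [::]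
| trig_propose s k w :
    is_primary (view s) i ->
    ~~ proposed (pv s) ->
    (n - f <= #|[set j : 'I_n | suggestion s j != None]|)%N ->
    (exists j, suggestion s j = Some (k, w)) ->
    (forall j k' w', suggestion s j = Some (k', w') -> k' <= k) ->
    trig i s (set_pv s (pv_addjoin (pv_proposed (pv s) true) (MPropose k w (view s)))) [::]
| trig_done_echo s val :
    (f.+1 <= #|[set j : 'I_n | rdone s j val]|)%N ->
    ~~ done_sent s ->
    trig i s (set_done_sent s true) (bcast (MDone val))
| trig_decide s val :
    (n - f <= #|[set j : 'I_n | rdone s j val]|)%N ->
    decided s = None ->
    trig i s (set_decided s (Some val)) [::].

(* a local step of nonfaulty party i; [avail j m] : a message m from j may be
   received by i.  Triggered actions take priority over receptions/timeouts.
   Every step ends with [flush]. *)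
Inductive lstep (avail : 'I_n -> msg -> Prop) (i : 'I_n) : lstate -> lstate -> seq out -> Prop :=
| ls_trig s s1 o :
    trig i s s1 o ->
    lstep avail i s (flush s1).1 (o ++ (flush s1).2)
| ls_deliver s j m :
    (forall s1 o, ~ trig i s s1 o) ->
    avail j m ->
    lstep avail i s (flush (deliver i j m s).1).1
                    ((deliver i j m s).2 ++ (flush (deliver i j m s).1).2)
| ls_timeout s :
    (forall s1 o, ~ trig i s s1 o) ->
    lstep avail i s (flush s).1 (bcast (MAbort (view s)) ++ (flush s).2).

Definition init_keys (i : 'I_n) : keys :=
  Keys 0 (x i) 0 (x i) 0 (x i) (-1) 0 (x i) (-1).

Definition pre_state (i : 'I_n) : lstate :=
  LState (init_keys i) (fresh_pv [::]) 0 (fun _ => 0) (fun _ => 0) false None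
         (fun _ _ => false).

Definition init_local (i : 'I_n) : lstate * seq out :=
  let e := enter_view (pre_state i) 0 in
  let fl := flush e.1 in (fl.1, e.2 ++ fl.2).

Record gstate := GState {
  loc : 'I_n -> lstate;
  sent : 'I_n -> 'I_n -> msg -> Prop }.    (* sent a b m : a has sent m to b *)

Definition init_gstate : gstate :=
  GState (fun i => (init_local i).1) (fun a b m => out_in b m (init_local a).2).

(* reachable global states: nonfaulty, non-terminated parties take steps;
   a message from a nonfaulty party must have been sent to the receiver,
   Byzantine (faulty) parties may send anything at any time *)
Inductive reachable : gstate -> Prop :=
| reach_init : reachable init_gstate
| reach_step g i s' o :
    reachable g ->
    i \notin F ->
    decided (loc g i) = None ->
    lstep (fun j m => sent g j i m \/ j \in F) i (loc g i) s' o ->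
    reachable (GState (updf (loc g) i s')
                      (fun a b m => sent g a b m \/ (a = i /\ out_in b m o))).

End ITHS.

From Pilot Require Import Defs.
From mathcomp Require Import all_boot all_order all_algebra zify.
From Stdlib Require List.
Import Order.TTheory GRing.Theory Num.Theory.
Set Implicit Arguments. Unset Strict Implicit. Unset Printing Implicit Defensive.
Local Open Scope ring_scope.

(* A nonfaulty party's key2 fields can only start supporting a pair (L, V')
   with L > 0 when, in some view w >= L, it adopts as key2 a value val <> V'
   after receiving <key1, val, w> from n - f parties.  At least f + 1 of these
   are nonfaulty, and a nonfaulty party that sent <key1, val, w> keeps from then
   on key1 >= w together with key1_val = val or prev_key1 >= w, which makes its
   key1 fields support (L, V').  Keys never exceed the current view, so these
   witnesses survive later key updates.  The lock of the other party only
   supplies the pair (L, V') = (lock, lock_val). *)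

Section Keys.
Variable V : eqType.
Implicit Types (K : keys V) (val Vv : V) (v w L : int).

Definition key1_supports K := supports (key1 K) (key1_val K) (prev_key1 K).
Definition key2_supports K := supports (key2 K) (key2_val K) (prev_key2 K).

(* The key1 fields still witness a <key1, val, v> message of the party. *)
Definition key1_attests K val v : bool :=
  (v <= key1 K) && ((key1_val K == val) || (v <= prev_key1 K)).

Definition keys_below K w : bool :=
  [&& key1 K <= w, prev_key1 K <= key1 K & key2 K <= w].

Definition key12 K :=
  (key1 K, key1_val K, prev_key1 K, key2 K, key2_val K, prev_key2 K).

(* The updates made upon n - f <echo, val, w> and n - f <key1, val, w>. *)
Definition adopt_key1 K w val : keys V :=
  if key1_val K != val then
    Keys (Defs.lock K) (lock_val K) (key3 K) (key3_val K) (key2 K) (key2_val K)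
         (prev_key2 K) w val (key1 K)
  else
    Keys (Defs.lock K) (lock_val K) (key3 K) (key3_val K) (key2 K) (key2_val K)
         (prev_key2 K) w (key1_val K) (prev_key1 K).

Definition adopt_key2 K w val : keys V :=
  if key2_val K != val then
    Keys (Defs.lock K) (lock_val K) (key3 K) (key3_val K) w val (key2 K)
         (key1 K) (key1_val K) (prev_key1 K)
  else
    Keys (Defs.lock K) (lock_val K) (key3 K) (key3_val K) w (key2_val K) (prev_key2 K)
         (key1 K) (key1_val K) (prev_key1 K).

(* [Q] holds of the values for which a key1 quorum was received in view [w]. *)
Definition keys_progress w (Q : pred V) K K' : Prop :=
  [/\ keys_below K' w,
      forall L Vv, key1_supports K L Vv -> key1_supports K' L Vv,
      forall val v, key1_attests K val v -> key1_attests K' val v &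
      forall L Vv, key2_supports K' L Vv ->
        key2_supports K L Vv \/ exists2 val, Q val & (L <= w) && (val != Vv)].

Lemma keys_below_le K w w' : keys_below K w -> w <= w' -> keys_below K w'.
Proof. by case/and3P=> ? ? ? ?; apply/and3P; split; lia. Qed.

Lemma key1_attests_supports K val v L Vv :
  key1_attests K val v -> L <= v -> val != Vv -> key1_supports K L Vv.
Proof.
rewrite /key1_supports /supports => /andP[vk /orP[/eqP-> | vpk]] Lv neq.
  by rewrite neq andbT; apply/orP; right; lia.
by apply/orP; left; lia.
Qed.

Lemma adopt_key1_attests K w val : key1_attests (adopt_key1 K w val) val w.
Proof. by rewrite /key1_attests /adopt_key1; case: eqVneq => [->|] /=; rewrite lexx eqxx. Qed.

Lemma keys_progress_key12 w {Q} K K' :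
  keys_below K w -> key12 K' = key12 K -> keys_progress w Q K K'.
Proof.
case: K => ? ? ? ? k2 v2 pk2 k1 v1 pk1; case: K' => ? ? ? ? ? ? ? ? ? ?.
by move=> below [-> -> -> -> -> ->]; split=> // *; left.
Qed.

Lemma keys_progress_adopt_key1 w Q K val :
  keys_below K w -> keys_progress w Q K (adopt_key1 K w val).
Proof.
rewrite /keys_progress /keys_below /key1_supports /key2_supports /key1_attests /supports.
rewrite /adopt_key1; case: K => ? ? ? ? k2 v2 pk2 k1 v1 pk1 /= /and3P[k1w pk1k1 k2w].
case: (eqVneq v1 val) => [->|neq] /=; split; try (by apply/and3P; split; lia);
  try (by move=> *; left).
- by move=> L Vv /orP[-> // | /andP[Lk1 ->]]; rewrite andbT (le_trans Lk1 k1w) orbT.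
- by move=> val' v /andP[vk1 ->]; rewrite andbT (le_trans vk1 k1w).
- by move=> L Vv /orP[Lpk1 | /andP[Lk1 _]]; rewrite ?Lk1 // (le_trans Lpk1 pk1k1).
- by move=> val' v /andP[vk1 _]; rewrite vk1 (le_trans vk1 k1w) orbT.
Qed.

Lemma keys_progress_adopt_key2 w (Q : pred V) K val :
  keys_below K w -> Q val -> keys_progress w Q K (adopt_key2 K w val).
Proof.
rewrite /keys_progress /keys_below /key2_supports /supports /adopt_key2.
case: K => ? ? ? ? k2 v2 pk2 k1 v1 pk1 /= /and3P[k1w pk1k1 k2w] Qval.
have quorum_case (P : Prop) L Vv : L <= w -> val != Vv ->
    P \/ exists2 val, Q val & (L <= w) && (val != Vv).
  by move=> Lw neq; right; exists val => //; rewrite Lw.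
case: (eqVneq v2 val) => [->|neq] /=; split=> //; try by apply/and3P; split; lia.
- by move=> L Vv /orP[-> | /andP[Lw nVv]]; [left | exact: quorum_case].
- move=> L Vv /orP[Lk2 | /andP[Lw nVv]]; last exact: quorum_case.
  case: (eqVneq v2 Vv) => [eVv | nVv].
    by apply: quorum_case; [lia | rewrite -eVv eq_sym].
  by left; rewrite Lk2 orbT.
Qed.

End Keys.

Lemma stage_eqbP a b : stage_eqb a b -> a = b.
Proof. by case: a; case: b. Qed.

Lemma In_rcons {T : Type} {y z : T} {s} : List.In y (rcons s z) -> List.In y s \/ y = z.
Proof. by rewrite -cats1 => /(List.in_app_or _ _ _) [ys | [<- | []]]; [left | right]. Qed.

Lemma In_flatten {T : Type} {y : T} {ss} :
  List.In y (flatten ss) -> exists2 s, List.In s ss & List.In y s.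
Proof.
elim: ss => //= s ss IH /(List.in_app_or _ _ _) [ys | /IH [s' ss' ys']].
  by exists s => //; left.
by exists s' => //; right.
Qed.

Section LocalStep.
Variables (n f : nat) (V : eqType).
Implicit Types (s : lstate n V) (o : seq (out n V)) (val : V) (v : int).

Lemma out_inE b (m : msg V) o : out_in b m o <-> List.In (b, m) o.
Proof. by elim: o => //= p o IH; split=> -[-> | /IH]; by [left | right]. Qed.

Lemma out_in_bcast {b} {m M : msg V} : out_in b m (bcast n M) -> m = M.
Proof. by rewrite out_inE => /List.in_map_iff [j [[_ ->]]]. Qed.

Definition key1_free o := forall b val v, ~ out_in b (MVote SKey1 val v) o.

Lemma key1_free_nil : key1_free [::].
Proof. by move=> ? ? ?. Qed.
#[local] Hint Resolve key1_free_nil : core.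

Lemma key1_vote_catr o1 o2 b val v :
  key1_free o1 -> out_in b (MVote SKey1 val v) (o1 ++ o2) -> out_in b (MVote SKey1 val v) o2.
Proof. by move=> free1 /out_inE /(List.in_app_or _ _ _) [/out_inE /free1 | /out_inE]. Qed.

Lemma key1_free_cat o1 o2 : key1_free o1 -> key1_free o2 -> key1_free (o1 ++ o2).
Proof. by move=> free1 free2 b val v /(key1_vote_catr free1) /free2. Qed.

Lemma key1_free_abort (b : bool) u :
  key1_free (if b then bcast n (MAbort V u) else [::]).
Proof. by case: b => // ? ? ? /out_in_bcast. Qed.

Definition quorum s (st : stage) : pred V :=
  fun val => (n - f <= #|[set j : 'I_n | recv (pv s) st j val]|)%N.

Definition local_inv s : Prop :=
  keys_below (ks s) (view s) /\
  forall val v, List.In (MVote SKey1 val v) (join (pv s)) -> key1_attests (ks s) val v.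

Lemma local_inv_rcons Q s s1 m :
  local_inv s -> view s1 = view s -> keys_progress (view s) Q (ks s) (ks s1) ->
  join (pv s1) = rcons (join (pv s)) m ->
  (forall val v, MVote SKey1 val v = m -> key1_attests (ks s1) val v) ->
  local_inv s1.
Proof.
move=> [_ attested] vs [below _ attests _] js new.
split=> [|val v]; first by rewrite vs.
by rewrite js => /In_rcons [/attested /attests | /new].
Qed.

Lemma stage_act_step st val s : local_inv s -> quorum s st val ->
  let s1 := (stage_act st val s).1 in
  [/\ view s1 = view s, recv (pv s1) = recv (pv s),
      keys_progress (view s) (quorum s SKey1) (ks s) (ks s1), local_inv s1 &
      key1_free (stage_act st val s).2].
Proof.
move=> inv q; have below := inv.1.
case: st q => q s1.
- have prog : keys_progress (view s) (quorum s SKey1) (ks s) (ks s1).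
    exact: keys_progress_adopt_key1.
  split=> //; apply: (local_inv_rcons inv _ prog) => // val' v [-> ->].
  exact: adopt_key1_attests.
- have prog : keys_progress (view s) (quorum s SKey1) (ks s) (ks s1).
    exact: keys_progress_adopt_key2.
  by split=> //; exact: (local_inv_rcons inv _ prog).
- have prog : keys_progress (view s) (quorum s SKey1) (ks s) (ks s1).
    exact: keys_progress_key12 below erefl.
  by split=> //; exact: (local_inv_rcons inv _ prog).
- have prog : keys_progress (view s) (quorum s SKey1) (ks s) (ks s1).
    exact: keys_progress_key12 below erefl.
  by split=> //; exact: (local_inv_rcons inv _ prog).
- have prog : keys_progress (view s) (quorum s SKey1) (ks s) (ks s).
    exact: keys_progress_key12 below erefl.
  by rewrite /s1 /=; case: ifP => _; split=> // b val' v /out_in_bcast.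
Qed.

Lemma trig_step i s s1 o : trig f i s s1 o -> local_inv s ->
  [/\ view s1 = view s, recv (pv s1) = recv (pv s),
      keys_progress (view s) (quorum s SKey1) (ks s) (ks s1), local_inv s1 &
      key1_free o].
Proof.
case=> [st val {}s q _ | {}s ? ? ? ? _ _ _ | {}s ? ? _ _ _ _ _ | {}s ? _ _ | {}s ? _ _] inv {s1 o}.
- exact: stage_act_step.
1,2: set s1 := set_pv _ _;
  have prog : keys_progress (view s) (quorum s SKey1) (ks s) (ks s1)
    := keys_progress_key12 inv.1 erefl;
  by split=> //; exact: (local_inv_rcons inv _ prog).
all: have prog : keys_progress (view s) (quorum s SKey1) (ks s) (ks s)
       := keys_progress_key12 inv.1 erefl.
- by split=> // b val' v /out_in_bcast.
- by split.
Qed.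

Lemma enter_view_inv s w : keys_below (ks s) w -> local_inv (enter_view s w).1.
Proof. by move=> below; split=> // val v [|[]]. Qed.

Lemma deliver_step i j m s : local_inv s ->
  let s1 := (deliver f i j m s).1 in
  [/\ ks s1 = ks s, local_inv s1, key1_free (deliver f i j m s).2 &
      forall st k w, recv (pv s1) st k w ->
        (recv (pv s) st k w /\ view s1 = view s) \/ (k = j /\ m = MVote st w (view s1))].
Proof.
move=> inv; case: m => [v | val | v | k3 v3 k2 v2 pk2 v | k1 v1 pk1 v | key val v | st val v] /=.
- by split=> //; left.
- by split=> //; left.
- rewrite /on_abort; case: ifP => _ /=; last by split=> //; left.
  case: ifP => [later | _]; split=> //; try by left.
  + split=> [| val' v' [|[]] //].
    by rewrite /=; apply: keys_below_le inv.1 _; lia.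
  + by apply: key1_free_cat; [exact: key1_free_abort | move=> ? ? ? /out_in_bcast].
  + exact: key1_free_abort.
- by case: ifP => _; split=> //; left.
- by case: ifP => _; split=> //; left.
- by case: ifP => _; split=> //; left.
- case: ifP => [/eqP vs | _]; split=> //; last by left.
  move=> st' k w /orP[/andP[/andP[/stage_eqbP -> /eqP ->] /eqP ->] | old]; last by left.
  by right; rewrite vs.
Qed.

Lemma flush_step s : local_inv s ->
  let s1 := (flush s).1 in
  [/\ ks s1 = ks s, view s1 = view s, recv (pv s1) = recv (pv s), local_inv s1 &
      forall b val v, out_in b (MVote SKey1 val v) (flush s).2 -> key1_attests (ks s1) val v].
Proof.
move=> [below attested]; have joined b val v :
    out_in b (MVote SKey1 val v)
      (flatten [seq (if hreq s j == view s then [seq (j, m) | m <- join (pv s)] else [::])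
               | j <- enum 'I_n]) ->
    key1_attests (ks s) val v.
  move=> /out_inE /In_flatten [o /List.in_map_iff [j [<- _]]].
  by case: ifP => // _ /List.in_map_iff [m [[_ ->]]]; apply: attested.
rewrite /flush; case: ifP => _ /=; split=> // b val v.
by move=> /out_inE /(List.in_app_or _ _ _) [/out_inE /joined | /List.in_map_iff [? []]].
Qed.

Lemma lstep_step avail i s s' o : lstep f avail i s s' o -> local_inv s ->
  [/\ local_inv s', keys_progress (view s) (quorum s SKey1) (ks s) (ks s'),
      forall b val v, out_in b (MVote SKey1 val v) o -> key1_attests (ks s') val v &
      forall st k w, recv (pv s') st k w ->
        (recv (pv s) st k w /\ view s' = view s) \/ avail k (MVote st w (view s'))].
Proof.
case=> [{}s s1 {}o t | {}s j m _ av | {}s _] inv.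
- have [vs rs prog inv1 free] := trig_step t inv.
  have [ks2 vs2 rs2 inv2 out2] := flush_step inv1.
  split=> //; first by rewrite ks2.
    by move=> b val v /(key1_vote_catr free) /out2.
  by move=> st k w; rewrite rs2 vs2 vs rs; left.
- have [ks1 inv1 free recv1] := deliver_step i j m inv.
  have [ks2 vs2 rs2 inv2 out2] := flush_step inv1.
  split=> //; first by rewrite ks2 ks1; exact: keys_progress_key12 inv.1 erefl.
    by move=> b val v /(key1_vote_catr free) /out2.
  by move=> st k w; rewrite rs2 vs2 => /recv1 [? | [-> <-]]; [left | right].
- have [ks2 vs2 rs2 inv2 out2] := flush_step inv.
  have free : key1_free (bcast n (MAbort V (view s))) by move=> ? ? ? /out_in_bcast.
  split=> //; first by rewrite ks2; exact: keys_progress_key12 inv.1 erefl.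
    by move=> b val v /(key1_vote_catr free) /out2.
  by move=> st k w; rewrite rs2 vs2; left.
Qed.

End LocalStep.

Lemma exists_subset_disjoint (T : finType) (A F : {set T}) k :
  (#|F| + k <= #|A|)%N -> exists S : {set T}, [/\ S \subset A, #|S| = k & [disjoint S & F]].
Proof.
move=> large; have : (k <= #|A :\: F|)%N.
  by rewrite cardsD; have := subset_leq_card (subsetIr A F); lia.
case/card_geqP=> s [uniq_s size_s sub_s]; exists [set y in s]; split.
- by apply/subsetP=> y; rewrite inE => /sub_s; rewrite inE => /andP[].
- by rewrite cardsE (card_uniqP uniq_s).
- by rewrite disjoints_subset; apply/subsetP=> y; rewrite !inE => /sub_s; rewrite !inE => /andP[].
Qed.

Section Invariant.
Variables (n f : nat) (V : eqType) (x : 'I_n -> V) (F : {set 'I_n}).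
Implicit Types (g : gstate n V) (val Vv : V) (v L : int).

Definition key1_backed g L Vv : Prop :=
  exists S : {set 'I_n}, #|S| = f.+1 /\ [disjoint S & F] /\
    (forall k, k \in S -> key1_supports (ks (loc g k)) L Vv).

Definition protocol_inv g : Prop :=
  [/\ forall a, a \notin F -> local_inv (loc g a),
      forall a b val v, a \notin F -> sent g a b (MVote SKey1 val v) ->
        key1_attests (ks (loc g a)) val v,
      forall a k st w, a \notin F -> k \notin F -> recv (pv (loc g a)) st k w ->
        sent g k a (MVote st w (view (loc g a))) &
      forall a L Vv, a \notin F -> 0 < L -> key2_supports (ks (loc g a)) L Vv ->
        key1_backed g L Vv].

Lemma init_local_step a : let s := (init_local x a).1 in
  [/\ local_inv s, ks s = init_keys x a, recv (pv s) = (fun _ _ _ => false) &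
      forall b val v, out_in b (MVote SKey1 val v) (init_local x a).2 ->
        key1_attests (ks s) val v].
Proof.
have inv0 : local_inv (enter_view (pre_state x a) 0).1 by apply: enter_view_inv.
have [ks1 _ recv1 inv1 out1] := flush_step inv0.
split=> // b val v.
have free0 : key1_free (enter_view (pre_state x a) 0).2 by move=> ? ? ? /out_in_bcast.
by move/(key1_vote_catr free0)/out1.
Qed.

Lemma protocol_inv_init : protocol_inv (init_gstate x).
Proof.
split=> [a _ | a b val v _ | a k st w _ _ | a L Vv _ L_gt0] /=;
  have [inv ks0 recv0 out0] := init_local_step a => //.
- exact: out0.
- by rewrite recv0.
- by rewrite ks0 /key2_supports /supports /=; case/orP=> [| /andP[]]; lia.
Qed.

Lemma key1_quorum_backed g i val L Vv :
  (3 * f < n)%N -> (#|F| <= f)%N -> protocol_inv g -> i \notin F ->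
  quorum f (loc g i) SKey1 val -> L <= view (loc g i) -> val != Vv ->
  key1_backed g L Vv.
Proof.
move=> small_f small_F [_ votes recvs _] honest_i q Lw neq.
have [S [sub_S card_S disj_S]] : exists S : {set 'I_n},
    [/\ S \subset [set k | recv (pv (loc g i)) SKey1 k val], #|S| = f.+1 & [disjoint S & F]].
  by apply: exists_subset_disjoint; apply: leq_trans q; lia.
exists S; split=> //; split=> // k k_S.
have honest_k : k \notin F by rewrite (disjointFr disj_S k_S).
have := subsetP sub_S k k_S; rewrite inE => /(recvs _ _ _ _ honest_i honest_k).
move/(votes _ _ _ _ honest_k) => attests_k.
exact: key1_attests_supports attests_k Lw neq.
Qed.

Lemma protocol_inv_step g i s' o :
  (3 * f < n)%N -> (#|F| <= f)%N -> protocol_inv g -> i \notin F ->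
  lstep f (fun j m => sent g j i m \/ j \in F) i (loc g i) s' o ->
  protocol_inv (GState (updf (loc g) i s')
                       (fun a b m => sent g a b m \/ (a = i /\ out_in b m o))).
Proof.
move=> small_f small_F inv honest_i step; have [locals votes recvs backed] := inv.
have [inv' [_ supports1 attests1 supports2] out' recv'] := lstep_step step (locals i honest_i).
set g' := GState _ _.
have persist k :
    (forall L Vv, key1_supports (ks (loc g k)) L Vv -> key1_supports (ks (loc g' k)) L Vv) /\
    (forall val v, key1_attests (ks (loc g k)) val v -> key1_attests (ks (loc g' k)) val v).
  by rewrite /= /updf; case: eqP => [-> | _].
have backed' L Vv : key1_backed g L Vv -> key1_backed g' L Vv.
  case=> S [card_S [disj_S supp_S]].
  by exists S; split=> //; split=> // k /supp_S /(persist k).1.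
split=> [a honest_a | a b val v honest_a | a k st w honest_a honest_k | a L Vv honest_a L_gt0];
  rewrite /= /updf.
- by case: eqP => _; [exact: inv' | exact: locals].
- case=> [/(votes _ _ _ _ honest_a) /(persist a).2 // | [-> out_a]].
  by rewrite eqxx; exact: out' out_a.
- case: eqP => [ai | _]; last by move/(recvs _ _ _ _ honest_a honest_k); left.
  rewrite ai; case/recv' => [[/(recvs _ _ _ _ honest_i honest_k) sent_k ->] | [sent_k | k_F]].
  + by left.
  + by left.
  + by rewrite k_F in honest_k.
- case: eqP => _; last by move/(backed _ _ _ honest_a L_gt0)/backed'.
  case/supports2 => [/(backed _ _ _ honest_i L_gt0)/backed' // | [val q /andP[Lw neq]]].
  exact/backed'/(key1_quorum_backed small_f small_F inv honest_i q Lw neq).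
Qed.

Lemma protocol_inv_reachable g :
  (3 * f < n)%N -> (#|F| <= f)%N -> reachable f x F g -> protocol_inv g.
Proof.
move=> small_f small_F; elim=> [| {}g i s' o _ inv honest_i _ step].
  exact: protocol_inv_init.
exact: protocol_inv_step small_f small_F inv honest_i step.
Qed.

End Invariant.

Theorem lemma2p10 (n f : nat) (V : eqType) (x : 'I_n -> V) (F : {set 'I_n})
    (g : gstate n V) :
  (3 * f < n)%N ->
  (#|F| <= f)%N ->
  reachable f x F g ->
  forall i j : 'I_n, i \notin F -> j \notin F ->
  let Ki := ks (loc g i) in
  let Kj := ks (loc g j) in
  0 < Defs.lock Ki ->
  (Defs.lock Ki <= prev_key2 Kj) || ((Defs.lock Ki <= key2 Kj) && (key2_val Kj != lock_val Ki)) ->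
  exists S : {set 'I_n},
    #|S| = f.+1 /\ [disjoint S & F] /\
    (forall k, k \in S ->
       supports (key1 (ks (loc g k))) (key1_val (ks (loc g k))) (prev_key1 (ks (loc g k)))
                (Defs.lock Ki) (lock_val Ki)).
Proof.
move=> small_f small_F reach i j _ honest_j Ki Kj lock_gt0 key2_supports_lock.
have [_ _ _ backed] := protocol_inv_reachable small_f small_F reach.
exact: backed j _ _ honest_j lock_gt0 key2_supports_lock.
Qed.
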